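(* Let $0<\delta<1$. Let $\mathcal I=(G=(V,E),\beta,\gamma,\lambda)$ be an anti-ferromagnetic two-spin system with maximum degree $\Delta\ge3$ and Gibbs distribution $\mu$, satisfying: either (a) $\gamma\le1$ and $(\beta,\gamma,\lambda)$ is $d$-unique with gap $\delta$ for every $1\le d\le\Delta-1$, or (b) $\gamma>1$, $(\beta,\gamma,\lambda)$ is $(\Delta-1)$-unique with gap $\delta$, and $G$ is $\Delta$-regular. Let $\chi=+1$ if $\lambda\le(\gamma/\beta)^{\Delta/2}$ and $\chi=-1$ otherwise, and $\pi=\mathrm{flip}(\mu,\chi)$. Then $\pi$ is completely $\exp(12^5)$-marginally stable.
   Context: Two-spin Gibbs distribution $\mu(\sigma)\propto\beta^{m_+(\sigma)}\gamma^{m_-(\sigma)}\lambda^{n_+(\sigma)}$ on $\{-1,+1\}^V$ ($m_\pm$ = edges with both endpoints $\pm1$, $n_+$ = number of $+1$ vertices). Anti-ferromagnetic: $0\le\beta\le\gamma$, $\gamma>0$, $\lambda>0$, $\beta\gamma<1$. $d$-unique with gap $\delta$: $\frac{d(1-\beta\gamma)\hat x_d}{(\beta\hat x_d+1)(\hat x_d+\gamma)}\le1-\delta$, $\hat x_d>0$ the unique fixed point of $F_d(x)=\lambda\left(\frac{\beta x+1}{x+\gamma}\right)^d$. Convention $(\gamma/\beta)^{\Delta/2}=+\infty$ if $\beta=0$. $\mathrm{flip}(\mu,\chi)(\sigma)=\mu(\chi\sigma)$. For a distribution $\nu$ on $\{-1,+1\}^V$: $\Omega(\nu)$ support, $\nu_\Lambda$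 marginal, $\nu^\sigma$ conditional given $\sigma\in\Omega(\nu_\Lambda)$. $\nu$ is $\zeta$-marginally stable if for every $i\in V$, $S\subseteq\Lambda\subseteq V\setminus\{i\}$, $\sigma\in\Omega(\nu_\Lambda)$: $R_i^\sigma\le\zeta$ and $R_i^\sigma\le\zeta R_i^{\sigma_S}$ with $R_i^\sigma=\nu_i^\sigma(+1)/\nu_i^\sigma(-1)$. $\nu$ is completely $\zeta$-marginally stable if $(\boldsymbol\lambda*\nu)$ is $\zeta$-marginally stable for all $\boldsymbol\lambda\in(0,1]^V$, where $(\boldsymbol\lambda*\nu)(\sigma)\propto\nu(\sigma)\prod_{i:\sigma_i=+1}\lambda_i$. *)

(* Spins: true = +1, false = -1. *)
From HB Require Import structures.
From mathcomp Require Import all_boot all_order all_algebra.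
From mathcomp Require Import reals sequences exp.
Set Implicit Arguments. Unset Strict Implicit. Unset Printing Implicit Defensive.
Import Order.TTheory GRing.Theory Num.Theory.
Local Open Scope ring_scope.

Section Defs.
Variable R : realType.
Variable V : finType.

Definition config := {ffun V -> bool}.

Definition simple_graph (e : rel V) : Prop := symmetric e /\ irreflexive e.

Definition deg (e : rel V) (v : V) : nat := #|[set u | e v u]|.
Definition maxdeg (e : rel V) : nat := \max_(v : V) deg e v.
Definition regular (e : rel V) (D : nat) : Prop := forall v, deg e v = D.

Definition edges (e : rel V) : {set {set V}} :=
  [set [set p.1; p.2] | p in [set p : V * V | e p.1 p.2]].

Definition m_spin (e : rel V) (s : config) (b : bool) : nat :=
  #|[set E in edges e | [forall x in E, s x == b]]|.
Definition n_plus (s : config) : nat := #|[set v | s v]|.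

Definition gibbs_weight (e : rel V) (beta gamma lambda : R) (s : config) : R :=
  beta ^+ m_spin e s true * gamma ^+ m_spin e s false * lambda ^+ n_plus s.
Definition gibbs (e : rel V) (beta gamma lambda : R) (s : config) : R :=
  gibbs_weight e beta gamma lambda s / \sum_(t : config) gibbs_weight e beta gamma lambda t.

Definition antiferro (beta gamma lambda : R) : Prop :=
  0 <= beta /\ beta <= gamma /\ 0 < gamma /\ 0 < lambda /\ beta * gamma < 1.

Definition Fd (beta gamma lambda : R) (d : nat) (x : R) : R :=
  lambda * ((beta * x + 1) / (x + gamma)) ^+ d.

Definition d_unique (beta gamma lambda : R) (d : nat) (delta : R) : Prop :=
  (exists x, 0 < x /\ Fd beta gamma lambda d x = x) /\
  forall x, 0 < x -> Fd beta gamma lambda d x = x ->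
    d%:R * (1 - beta * gamma) * x / ((beta * x + 1) * (x + gamma)) <= 1 - delta.

(** chi = +1 (true) iff lambda <= (gamma/beta)^(Delta/2), with value +oo if beta = 0 *)
Definition chi_of (beta gamma lambda : R) (D : nat) : bool :=
  if beta == 0 then true else lambda <= powR (gamma / beta) (D%:R / 2).

Definition flip (mu : config -> R) (chi : bool) (s : config) : R :=
  mu (if chi then s else [ffun x => ~~ s x]).

(** marginals / conditionals of a distribution nu on {-1,+1}^V.
    A partial configuration on L is represented by (L, s) with s : config. *)
Definition agree (L : {set V}) (s t : config) : bool := [forall x in L, s x == t x].
Definition marg (nu : config -> R) (L : {set V}) (s : config) : R :=
  \sum_(t | agree L s t) nu t.
Definition cond_marg (nu : config -> R) (L : {set V}) (s : config) (i : V) (b : bool) : R :=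
  (\sum_(t | agree L s t && (t i == b)) nu t) / marg nu L s.
Definition Rratio (nu : config -> R) (L : {set V}) (s : config) (i : V) : R :=
  cond_marg nu L s i true / cond_marg nu L s i false.

(** zeta-marginal stability. R_i^sigma <= zeta (< +oo) forces nu_i^sigma(-1) > 0,
    which we state explicitly so that the ratios are genuine finite reals. *)
Definition marginally_stable (nu : config -> R) (zeta : R) : Prop :=
  forall (i : V) (S L : {set V}) (s : config),
    S \subset L -> i \notin L -> 0 < marg nu L s ->
    [/\ 0 < cond_marg nu L s i false,
        Rratio nu L s i <= zeta &
        Rratio nu L s i <= zeta * Rratio nu S s i].

Definition tilt (lam : V -> R) (nu : config -> R) (s : config) : R :=
  (nu s * \prod_(i | s i) lam i) / \sum_(t : config) (nu t * \prod_(i | t i) lam i).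

Definition completely_marginally_stable (nu : config -> R) (zeta : R) : Prop :=
  forall lam : V -> R, (forall i, 0 < lam i <= 1) -> marginally_stable (tilt lam nu) zeta.

End Defs.

(* Write c = beta gamma <= 1.  In the flipped measure, changing the spin of a vertex j from
   -1 to +1 multiplies the weight by K_j c^(number of +1 neighbours of j), where K_j <= M
   with M = lambda / gamma^Delta if chi = +1 (by gamma <= 1 or regularity) and
   M = (lambda beta^Delta)^-1 if chi = -1 (by beta <= 1); a tilt by lambda_j <= 1 only
   replaces K_j by lambda_j K_j.  Hence every ratio R_i^sigma is at most K_i times a
   product of factors c or 1, so at most M, and unpinning one of the at most Delta
   neighbours of i decreases it at most by q = (1 + c M) / (1 + M) >= exp(-(1 - c) M),
   which gives R_i^sigma <= exp(Delta (1 - c) M) R_i^(sigma_S).  Finally, at the fixed point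
   x of F_(Delta-1) one has M = u ((1 + u) / (1 + c u))^(Delta-1) with u = x / gamma, or
   the same expression at 1 / (c u) when chi = -1; the choice of chi is exactly what makes
   c u^2 <= 1 at the point used, and then the uniqueness gap gives M <= 4 e^5 and
   Delta (1 - c) M <= 15 e^5 < 12^5. *)

From HB Require Import structures.
From mathcomp Require Import all_boot all_order all_algebra.
From mathcomp Require Import reals sequences exp.
From mathcomp Require Import ring lra.
Import Order.TTheory GRing.Theory Num.Theory.
Local Open Scope ring_scope.
Set Implicit Arguments. Unset Strict Implicit. Unset Printing Implicit Defensive.

Section Toggle.
Variable V : finType.
Implicit Types (s t : config V) (j : V).

Definition toggle (j : V) (t : config V) : config V :=
  [ffun x => if x == j then ~~ t x else t x].

Lemma toggleK j : involutive (toggle j).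
Proof. by move=> t; apply/ffunP=> x; rewrite !ffunE; case: eqP => // _; rewrite negbK. Qed.

Lemma toggle_inj j : injective (toggle j).
Proof. exact: inv_inj (toggleK j). Qed.

Lemma toggle_at j t : toggle j t j = ~~ t j.
Proof. by rewrite ffunE eqxx. Qed.

Lemma toggle_ne j t x : x != j -> toggle j t x = t x.
Proof. by rewrite ffunE => /negbTE ->. Qed.

Lemma agree_toggle (L : {set V}) s t j : j \notin L -> agree L s (toggle j t) = agree L s t.
Proof.
move=> jL; apply/forall_inP/forall_inP => H x xL; have := H x xL;
  by rewrite toggle_ne //; apply: contraNneq jL => <-.
Qed.

Lemma agree_sub (S L : {set V}) s t : S \subset L -> agree L s t -> agree S s t.
Proof. by move=> SL /forall_inP H; apply/forall_inP => x /(subsetP SL) /H. Qed.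

Lemma sum_toggle (R : nmodType) (P : pred (config V)) j (F : config V -> R) :
  (forall t, P (toggle j t) = P t) ->
  \sum_(t | P t && t j) F t = \sum_(t | P t && ~~ t j) F (toggle j t).
Proof.
move=> HP; rewrite (reindex_inj (@toggle_inj j)); apply: eq_bigl => t.
by rewrite HP toggle_at.
Qed.

Lemma sum_toggle_pair (R : nmodType) (P : pred (config V)) j (F : config V -> R) :
  (forall t, P (toggle j t) = P t) ->
  \sum_(t | P t) F t = \sum_(t | P t && ~~ t j) (F (toggle j t) + F t).
Proof. by move=> HP; rewrite (bigID (fun t : config V => t j)) /= sum_toggle // -big_split. Qed.

Lemma prod_toggle (R : comPzSemiRingType) (F : V -> R) t j : ~~ t j ->
  \prod_(i | toggle j t i) F i = F j * \prod_(i | t i) F i.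
Proof.
move=> tj; rewrite (bigD1 j) ?toggle_at //=; congr (_ * _); apply: eq_bigl => i.
by case: (eqVneq i j) => [->|ij]; rewrite ?(negbTE tj) ?andbF ?toggle_ne ?andbT.
Qed.

End Toggle.

Section UnpinFactor.
Variable R : realType.
Implicit Types c M rho : R.

(* The minimum of (1 + c rho) / (1 + rho) over rho in [0, M]: the worst factor by which
   unpinning one neighbour of i can lower R_i. *)
Definition unpin_factor c M : R := (1 + c * M) / (1 + M).

Lemma unpin_factor_ge0 c M : 0 <= c -> 0 <= M -> 0 <= unpin_factor c M.
Proof. by move=> c0 M0; rewrite divr_ge0 ?addr_ge0 ?mulr_ge0. Qed.

Lemma unpin_factor_le1 c M : c <= 1 -> 0 <= M -> unpin_factor c M <= 1.
Proof. by move=> c1 M0; rewrite ler_pdivrMr ?mul1r ?lerD2l ?ler_piMl // ltr_wpDr. Qed.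

Lemma unpin_factor_le c M rho : c <= 1 -> 0 <= rho <= M ->
  unpin_factor c M * (1 + rho) <= 1 + c * rho.
Proof.
move=> c1 /andP[rho0 rhoM]; rewrite mulrAC ler_pdivrMr; last by lra.
rewrite -subr_ge0.
have -> : (1 + c * rho) * (1 + M) - (1 + c * M) * (1 + rho) = (M - rho) * (1 - c) by ring.
by rewrite mulr_ge0 // subr_ge0.
Qed.

Lemma expR_le_unpin_factor_expn c M (D : nat) : 0 <= c <= 1 -> 0 <= M ->
  expR (- (D%:R * (1 - c) * M)) <= unpin_factor c M ^+ D.
Proof.
move=> /andP[c0 c1] M0; have cM0 : 0 <= c * M by rewrite mulr_ge0.
have [cM1 M1] : 0 < 1 + c * M /\ 0 < 1 + M by split; lra.
have q_ge : expR (- ((1 - c) * M)) <= unpin_factor c M.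
  rewrite expRN /unpin_factor -invf_div lef_pV2 ?posrE ?expR_gt0 ?divr_gt0 //.
  have -> : (1 + M) / (1 + c * M) = 1 + (1 - c) * M / (1 + c * M).
    by field; rewrite gt_eqF.
  apply: le_trans (expR_ge1Dx _) _; rewrite ler_expR ler_pdivrMr //.
  by rewrite ler_peMr ?mulr_ge0 ?subr_ge0 ?lerDl.
rewrite -mulrA -mulrN expRM_natl lerXn2r ?nnegrE ?expR_ge0 //.
exact: le_trans (expR_ge0 _) q_ge.
Qed.

End UnpinFactor.

Section LocalRatio.
Variables (R : realType) (V : finType) (e : rel V).
Hypothesis e_irr : irreflexive e.
Variables (c M : R) (D : nat) (nu : config V -> R) (K : V -> R).
Implicit Types (L S : {set V}) (s t : config V) (i j : V).

Definition cweight (b : bool) : R := if b then c else 1.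
Definition nbr_factor (j : V) (t : config V) : R := \prod_(k | e j k) cweight (t k).
Definition nbr_factor_in (S : {set V}) (s : config V) (j : V) : R :=
  \prod_(k | e j k && (k \in S)) cweight (s k).
Definition nbr_factor_out (S : {set V}) (j : V) (t : config V) : R :=
  \prod_(k | e j k && (k \notin S)) cweight (t k).
Definition pinned_mass (L : {set V}) (s : config V) (i : V) (b : bool) : R :=
  \sum_(t | agree L s t && (t i == b)) nu t.

Hypothesis c01 : 0 <= c <= 1.
Let c_ge0 : 0 <= c := (andP c01).1.
Let c_le1 : c <= 1 := (andP c01).2.
Hypothesis K_bound : forall j, 0 <= K j <= M.
Hypothesis deg_le : forall j, (deg e j <= D)%N.
Hypothesis nu_ge0 : forall t, 0 <= nu t.
Hypothesis nu_toggle :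
  forall j (t : config V), ~~ t j -> nu (toggle j t) = K j * nbr_factor j t * nu t.

Lemma cweight01 b : 0 <= cweight b <= 1.
Proof. by case: b => //=; rewrite ler01 lexx. Qed.

Lemma prod_cweight01 (I : Type) (r : seq I) (P : pred I) (F : I -> bool) :
  0 <= \prod_(k <- r | P k) cweight (F k) <= 1.
Proof.
apply/andP; split; first by apply: prodr_ge0 => k _; case/andP: (cweight01 (F k)).
by apply: prodr_ile1 => k _; apply: cweight01.
Qed.

Lemma nbr_factor01 j t : 0 <= nbr_factor j t <= 1.
Proof. exact: prod_cweight01. Qed.

Lemma M_ge0 (j : V) : 0 <= M.
Proof. by case/andP: (K_bound j); apply: le_trans. Qed.

Lemma sum_cweight_ge (P : pred (config V)) (H : config V -> R) j :
  (forall t, P (toggle j t) = P t) -> (forall t, H (toggle j t) = H t) ->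
  (forall t, 0 <= H t) ->
  unpin_factor c M * \sum_(t | P t) nu t * H t <=
  \sum_(t | P t) nu t * H t * cweight (t j).
Proof.
move=> HP HH H0; rewrite !(sum_toggle_pair _ HP) mulr_sumr.
apply: ler_sum => t /andP[_ tj].
rewrite nu_toggle // HH /cweight toggle_at (negbTE tj) /=.
have [K0 KM] := andP (K_bound j); have [n0 n1] := andP (nbr_factor01 j t).
have rhoM : 0 <= K j * nbr_factor j t <= M.
  by rewrite mulr_ge0 //= (le_trans _ KM) // ler_piMr.
set rho := K j * nbr_factor j t; set w := nu t * H t.
have -> : unpin_factor c M * (rho * nu t * H t + w) = unpin_factor c M * (1 + rho) * w.
  by rewrite /w; ring.
have -> : rho * nu t * H t * c + w * 1 = (1 + c * rho) * w by rewrite /w; ring.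
by rewrite ler_wpM2r ?mulr_ge0 // unpin_factor_le.
Qed.

Lemma sum_prod_cweight_ge (r : seq V) (P : pred (config V)) :
  uniq r -> (forall j t, j \in r -> P (toggle j t) = P t) ->
  unpin_factor c M ^+ size r * \sum_(t | P t) nu t <=
  \sum_(t | P t) nu t * \prod_(k <- r) cweight (t k).
Proof.
elim: r => [|j r IH] /= => [_ _|/andP[jr ur] HP].
  by rewrite expr0 mul1r; under [X in _ <= X]eq_bigr do rewrite big_nil mulr1.
set H := fun t : config V => \prod_(k <- r) cweight (t k).
have H_toggle t : H (toggle j t) = H t.
  rewrite /H big_seq [RHS]big_seq; apply: eq_bigr => k kr.
  by rewrite toggle_ne //; apply: contraNneq jr => <-.
have H_ge0 t : 0 <= H t by case/andP: (prod_cweight01 r predT t).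
under [X in _ <= X]eq_bigr do rewrite big_cons [cweight _ * _]mulrC mulrA.
rewrite exprS -mulrA; apply: le_trans (sum_cweight_ge _ H_toggle H_ge0); last first.
  by move=> t; apply: HP; rewrite inE eqxx.
rewrite ler_wpM2l ?unpin_factor_ge0  ?(M_ge0 j) // IH // => k t kr.
by apply: HP; rewrite inE kr orbT.
Qed.

Lemma pinned_mass_false L s i :
  pinned_mass L s i false = \sum_(t | agree L s t && ~~ t i) nu t.
Proof. by apply: eq_bigl => t; rewrite eqbF_neg. Qed.

Lemma pinned_mass_true L s i : i \notin L ->
  pinned_mass L s i true = \sum_(t | agree L s t && ~~ t i) K i * nbr_factor i t * nu t.
Proof.
move=> iL; rewrite /pinned_mass; under eq_bigl do rewrite eqb_id.
rewrite sum_toggle => [|t]; last by rewrite agree_toggle.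
by apply: eq_bigr => t /andP[_ ti]; rewrite nu_toggle.
Qed.

Lemma marg_pinned L s i :
  marg nu L s = pinned_mass L s i true + pinned_mass L s i false.
Proof.
rewrite /marg (bigID (fun t : config V => t i)) /=.
by congr (_ + _); apply: eq_bigl => t; rewrite ?eqb_id ?eqbF_neg.
Qed.

Lemma Rratio_pinned L s i : 0 < marg nu L s ->
  Rratio nu L s i = pinned_mass L s i true / pinned_mass L s i false.
Proof.
by move=> m0; rewrite /Rratio /cond_marg invf_div mulrA divfK // gt_eqF.
Qed.

Lemma pinned_mass_ge0 L s i b : 0 <= pinned_mass L s i b.
Proof. exact: sumr_ge0. Qed.

Lemma pinned_mass_sub S L s i b : S \subset L ->
  pinned_mass L s i b <= pinned_mass S s i b.
Proof.
move=> SL; rewrite /pinned_mass big_mkcond [X in _ <= X]big_mkcond; apply: ler_sum => t _.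
case: (boolP (agree L s t)) => [/(agree_sub SL) -> //|_] /=.
by case: ifP.
Qed.

Lemma nbr_factor_split S s t i : agree S s t ->
  nbr_factor i t = nbr_factor_in S s i * nbr_factor_out S i t.
Proof.
move=> /forall_inP st; rewrite /nbr_factor (bigID (mem S)) /=; congr (_ * _).
by apply: eq_bigr => k /andP[_ /st /eqP ->].
Qed.

Lemma pinned_mass_true_split S L s i : S \subset L -> i \notin L ->
  pinned_mass L s i true =
  K i * nbr_factor_in S s i * \sum_(t | agree L s t && ~~ t i) nu t * nbr_factor_out S i t.
Proof.
move=> SL iL; rewrite pinned_mass_true // mulr_sumr; apply: eq_bigr => t /andP[Lt _].
by rewrite (nbr_factor_split i (agree_sub SL Lt)); ring.
Qed.

Lemma pinned_mass_true_le S L s i : S \subset L -> i \notin L ->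
  pinned_mass L s i true <= K i * nbr_factor_in S s i * pinned_mass L s i false.
Proof.
move=> SL iL; rewrite (pinned_mass_true_split s SL iL) pinned_mass_false.
rewrite ler_wpM2l ?mulr_ge0 ?(andP (K_bound i)).1 ?(andP (prod_cweight01 _ _ _)).1 //.
apply: ler_sum => t _; rewrite ler_piMr //.
exact: (andP (prod_cweight01 _ _ _)).2.
Qed.

Lemma pinned_mass_true_ge S s i : i \notin S ->
  unpin_factor c M ^+ D * (K i * nbr_factor_in S s i * pinned_mass S s i false) <=
  pinned_mass S s i true.
Proof.
move=> iS; rewrite (pinned_mass_true_split s (subxx S) iS) mulrCA.
rewrite ler_wpM2l ?mulr_ge0 ?(andP (K_bound i)).1 ?(andP (prod_cweight01 _ _ _)).1 //.
set J := [set k | e i k && (k \notin S)].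
have out_enum t : nbr_factor_out S i t = \prod_(k <- enum J) cweight (t k).
  by rewrite big_enum; apply: eq_bigl => k; rewrite inE.
under [X in _ <= X]eq_bigr do rewrite out_enum.
apply: le_trans (sum_prod_cweight_ge (enum_uniq (mem J)) _); last first.
  move=> j t; rewrite mem_enum inE => /andP[ij jS].
  rewrite agree_toggle // toggle_ne //; by apply: contraTneq ij => ->; rewrite e_irr.
rewrite pinned_mass_false ler_wpM2r ?sumr_ge0 // -cardE.
rewrite ler_wiXn2l ?unpin_factor_ge0 ?unpin_factor_le1  ?(M_ge0 i) //.
apply: leq_trans (deg_le i); apply: subset_leq_card; apply/subsetP => k.
by rewrite !inE => /andP[].
Qed.

Lemma local_ratio_bounds i S L s : S \subset L -> i \notin L -> 0 < marg nu L s ->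
  [/\ 0 < cond_marg nu L s i false, Rratio nu L s i <= M &
      unpin_factor c M ^+ D * Rratio nu L s i <= Rratio nu S s i].
Proof.
move=> SL iL m0; have iS : i \notin S by apply: contra iL => /(subsetP SL).
have [K0 KM] := andP (K_bound i).
have [in0 in1] := andP (prod_cweight01 (index_enum V) (fun k => e i k && (k \in S)) s).
have upper := pinned_mass_true_le s SL iL.
have negL : 0 < pinned_mass L s i false.
  rewrite lt_neqAle pinned_mass_ge0 andbT; apply: contraTneq m0 => negL0.
  rewrite -negL0 mulr0 in upper.
  by rewrite (marg_pinned _ _ i) -negL0 addr0 -leNgt.
have negS : 0 < pinned_mass S s i false by apply: lt_le_trans (pinned_mass_sub _ _ _ SL).
have mS : 0 < marg nu S s by rewrite (marg_pinned _ _ i) ltr_wpDl ?pinned_mass_ge0.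
have RL : Rratio nu L s i <= K i * nbr_factor_in S s i.
  by rewrite Rratio_pinned // ler_pdivrMr.
split.
- by rewrite /cond_marg divr_gt0.
- by rewrite (le_trans RL) // (le_trans _ KM) // ler_piMr.
- rewrite (Rratio_pinned _ mS) ler_pdivlMr // -mulrA.
  apply: le_trans (pinned_mass_true_ge s iS).
  by rewrite ler_wpM2l ?ler_wpM2r ?exprn_ge0 ?unpin_factor_ge0  ?(M_ge0 i) // ltW.
Qed.

Theorem marginally_stable_local zeta :
  M <= zeta -> expR (D%:R * (1 - c) * M) <= zeta -> marginally_stable nu zeta.
Proof.
move=> Mz Ez i S L s SL iL m0.
have [neg0 RLM RSL] := local_ratio_bounds SL iL m0.
split=> //; first exact: le_trans Mz.
have RL0 : 0 <= Rratio nu L s i.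
  by rewrite /Rratio /cond_marg !divr_ge0 ?sumr_ge0.
apply: le_trans (ler_wpM2l (le_trans (expR_ge0 _) Ez) RSL); rewrite mulrA ler_peMl //.
apply: le_trans (ler_wpM2r (exprn_ge0 _ _) Ez); last first.
  by rewrite unpin_factor_ge0  ?(M_ge0 i).
rewrite -[leLHS](expRxMexpNx_1 (D%:R * (1 - c) * M)).
by apply: ler_wpM2l; [exact: expR_ge0 | exact: expR_le_unpin_factor_expn (M_ge0 i)].
Qed.

End LocalRatio.

Section Tilt.
Variables (R : realType) (V : finType) (lam : V -> R) (mu : config V -> R).
Implicit Types (s t : config V) (j : V).

Lemma tilt_ge0 t : (forall i, 0 <= lam i) -> (forall s, 0 <= mu s) -> 0 <= tilt lam mu t.
Proof.
move=> lam_ge0 mu_ge0.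
have w_ge0 s : 0 <= mu s * \prod_(i | s i) lam i by rewrite mulr_ge0 ?prodr_ge0.
by rewrite divr_ge0 ?sumr_ge0.
Qed.

Lemma tilt_toggle (a : R) t j : ~~ t j -> mu (toggle j t) = a * mu t ->
  tilt lam mu (toggle j t) = lam j * a * tilt lam mu t.
Proof. by move=> tj mu_t; rewrite /tilt mu_t prod_toggle // !mulrA; congr (_ / _); ring. Qed.

End Tilt.

Theorem completely_marginally_stable_local (R : realType) (V : finType) (e : rel V)
    (c M zeta : R) (D : nat) (mu : config V -> R) (K : V -> R) :
  irreflexive e -> 0 <= c <= 1 -> (forall j, 0 <= K j <= M) ->
  (forall j, (deg e j <= D)%N) -> (forall t, 0 <= mu t) ->
  (forall j (t : config V), ~~ t j -> mu (toggle j t) = K j * nbr_factor e c j t * mu t) ->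
  M <= zeta -> expR (D%:R * (1 - c) * M) <= zeta ->
  completely_marginally_stable mu zeta.
Proof.
move=> e_irr c01 K_bound deg_le mu_ge0 mu_toggle Mz Ez lam lam01.
have [lam_ge0 lam_le1] : (forall i, 0 <= lam i) /\ (forall i, lam i <= 1).
  by split=> i; case/andP: (lam01 i) => // /ltW.
apply: (marginally_stable_local e_irr (c := c) (M := M) (D := D) (K := fun j => lam j * K j)) => //.
- move=> j; have [K0 KM] := andP (K_bound j).
  by rewrite mulr_ge0 //= (le_trans _ KM) // ler_piMl.
- by move=> t; apply: tilt_ge0.
- by move=> j t tj; rewrite (tilt_toggle _ tj (mu_toggle j t tj)) !mulrA.
Qed.

Section GibbsToggle.
Variables (V : finType) (e : rel V).
Hypotheses (e_sym : symmetric e) (e_irr : irreflexive e).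
Implicit Types (s t : config V) (j k : V) (b : bool).

Definition mono_edges s b : {set {set V}} :=
  [set E in edges e | [forall x in E, s x == b]].
Definition nbr_count s j b : nat := #|[set k | e j k && (s k == b)]|.

Lemma nbr_ne j k : e j k -> k != j.
Proof. by apply: contraTneq => ->; rewrite e_irr. Qed.

Lemma mono_edges_toggle_sub s j :
  mono_edges s (~~ s j) \subset mono_edges (toggle j s) (~~ s j).
Proof.
apply/subsetP => E; rewrite !inE => /andP[-> /forall_inP sE] /=.
apply/forall_inP => x xE; have := sE x xE.
by case: (eqVneq x j) => [->|xj]; rewrite ?toggle_at ?toggle_ne // => /eqP <-; rewrite negbK.
Qed.

Lemma mono_edges_toggle_diff s j :
  mono_edges (toggle j s) (~~ s j) :\: mono_edges s (~~ s j) =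
  [set [set j; k] | k in [set k | e j k && (s k == ~~ s j)]].
Proof.
set b := ~~ s j; set t := toggle j s.
apply/setP => E; rewrite !inE; apply/idP/idP.
- case/andP=> + /andP[Ee /forall_inP tE]; rewrite Ee /= => /forall_inP sE.
  have [x0 x0E sx0] : exists2 x0, x0 \in E & s x0 != b.
    by apply/exists_inP; rewrite -negb_forall_in; apply/forall_inP.
  have x0j : x0 = j by apply/eqP; apply: contraNT sx0 => x0j; rewrite -(toggle_ne s x0j) tE.
  subst x0; case/imsetP: Ee => [[x y]]; rewrite inE /= => exy EE; subst E.
  have other k : k \in [set x; y] -> k != j -> s k == b.
    by move=> kE kj; rewrite -(toggle_ne s kj) tE.
  move: x0E; rewrite !inE => /orP[] /eqP jE.
  + subst x; apply/imsetP; exists y => //.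
    by rewrite inE exy other ?nbr_ne // !inE eqxx orbT.
  + subst y; have ejx : e j x by rewrite e_sym.
    apply/imsetP; exists x; last by rewrite setUC.
    by rewrite inE ejx other ?nbr_ne // !inE eqxx.
- case/imsetP => k; rewrite inE => /andP[ejk skb] ->.
  apply/and3P; split.
  + apply: contraTN isT => /andP[_ /forall_inP /(_ j)]; rewrite !inE eqxx /= => /(_ isT).
    by rewrite /b; case: (s j).
  + by apply/imsetP; exists (j, k); rewrite ?inE.
  + apply/forall_inP => x; rewrite !inE => /orP[] /eqP ->; first by rewrite /t toggle_at.
    by rewrite /t toggle_ne ?nbr_ne.
Qed.

Lemma m_spinE s b : m_spin e s b = #|mono_edges s b|.
Proof. by []. Qed.

Lemma m_spin_toggle s j :
  m_spin e (toggle j s) (~~ s j) = (m_spin e s (~~ s j) + nbr_count s j (~~ s j))%N.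
Proof.
rewrite !m_spinE -(cardsID (mono_edges s (~~ s j))).
rewrite (setIidPr (mono_edges_toggle_sub s j)) mono_edges_toggle_diff card_in_imset //.
move=> k1 k2; rewrite !inE => /andP[e1 _] _ /setP/(_ k1).
rewrite !inE eqxx orbT => /esym/orP[] /eqP // k1j.
by move: (nbr_ne e1); rewrite k1j eqxx.
Qed.

Lemma nbr_count_toggle s j b : nbr_count (toggle j s) j b = nbr_count s j b.
Proof.
by apply: eq_card => k; rewrite !inE; case: (boolP (e j k)) => // /nbr_ne kj; rewrite toggle_ne.
Qed.

Lemma deg_nbr_count s j : deg e j = (nbr_count s j true + nbr_count s j false)%N.
Proof.
rewrite /deg -(cardsID [set k | s k] [set k | e j k]).
by congr (_ + _)%N; apply: eq_card => k; rewrite !inE ?eqb_id ?eqbF_neg andbC.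
Qed.

Lemma n_plus_toggle s j : ~~ s j -> n_plus (toggle j s) = (n_plus s).+1.
Proof.
move=> sj; rewrite /n_plus; have -> : [set v | toggle j s v] = j |: [set v | s v].
  apply/setP => v; rewrite !inE; case: (eqVneq v j) => [->|vj]; first by rewrite toggle_at.
  by rewrite toggle_ne.
by rewrite cardsU1 inE sj.
Qed.

Lemma gibbs_weight_toggle (R : realType) (be ga la : R) s j : ~~ s j ->
  gibbs_weight e be ga la (toggle j s) * ga ^+ nbr_count s j false =
  gibbs_weight e be ga la s * (la * be ^+ nbr_count s j true).
Proof.
move=> sj; have m_true := m_spin_toggle s j; rewrite (negbTE sj) /= in m_true.
have m_false := m_spin_toggle (toggle j s) j.
rewrite toggleK toggle_at negbK (negbTE sj) nbr_count_toggle in m_false.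
rewrite /gibbs_weight m_true m_false n_plus_toggle // !exprD exprS.
move: (be ^+ _) (be ^+ _) (ga ^+ _) (ga ^+ _) (la ^+ _) => b1 b2 g1 g2 l1; ring.
Qed.

End GibbsToggle.

Section FlipGibbs.
Variables (R : realType) (V : finType) (e : rel V).
Hypotheses (e_sym : symmetric e) (e_irr : irreflexive e).
Variables (be ga la : R).
Hypotheses (be_ge0 : 0 <= be) (ga_gt0 : 0 < ga) (la_gt0 : 0 < la).
Implicit Types (s t : config V) (j : V).

(* For [chi = false] this is meaningful only when [be > 0]: at [be = 0] the inverse
   [(la * 0)^-1] is a junk value. *)
Definition flip_activity (chi : bool) (n : nat) : R :=
  if chi then la / ga ^+ n else (la * be ^+ n)^-1.

Lemma flip_activity_ge0 chi n : 0 <= flip_activity chi n.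
Proof.
by case: chi; rewrite /flip_activity ?invr_ge0 ?divr_ge0 ?mulr_ge0 ?exprn_ge0 ?(ltW la_gt0) ?(ltW ga_gt0).
Qed.

Lemma flip_activity_le (chi : bool) n m : (n <= m)%N -> (chi -> ga <= 1) -> (~~ chi -> 0 < be <= 1) ->
  flip_activity chi n <= flip_activity chi m.
Proof.
case: chi => nm hga hbe; rewrite /flip_activity.
  rewrite ler_pM2l // lef_pV2 ?posrE ?exprn_gt0 //.
  by rewrite (ler_wiXn2l (ltW ga_gt0) (hga isT) nm).
have /andP[be_gt0 be1] := hbe isT.
rewrite lef_pV2 ?posrE ?mulr_gt0 ?exprn_gt0 //.
by rewrite ler_pM2l // (ler_wiXn2l (ltW be_gt0) be1 nm).
Qed.

Definition negc t : config V := [ffun x => ~~ t x].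

Lemma nbr_factorE (c : R) t j : nbr_factor e c j t = c ^+ nbr_count e t j true.
Proof.
rewrite /nbr_factor /cweight -big_mkcondr /= -prodr_const.
by apply: eq_bigl => k; rewrite inE eqb_id.
Qed.

Lemma gibbs_weight_toggle_plus t j : ~~ t j ->
  gibbs_weight e be ga la (toggle j t) =
  flip_activity true (deg e j) * nbr_factor e (be * ga) j t * gibbs_weight e be ga la t.
Proof.
move=> tj; have gm0 : ga ^+ nbr_count e t j false != 0 by rewrite expf_neq0 // gt_eqF.
have gp0 : ga ^+ nbr_count e t j true != 0 by rewrite expf_neq0 // gt_eqF.
apply: (mulIf gm0); rewrite gibbs_weight_toggle // nbr_factorE (deg_nbr_count e t j).
rewrite /flip_activity exprD exprMn.
move: (ga ^+ _) gm0 (ga ^+ _) gp0 (be ^+ _) (gibbs_weight _ _ _ _ _) => gm gm0 gp gp0 bp w.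
by field; rewrite gm0 gp0.
Qed.

Lemma negc_toggle t j : negc (toggle j t) = toggle j (negc t).
Proof.
apply/ffunP => x; rewrite !ffunE.
by case: (eqVneq x j) => [->|xj]; rewrite ?toggle_at ?toggle_ne ?ffunE.
Qed.

Lemma nbr_count_negc t j b : nbr_count e (negc t) j b = nbr_count e t j (~~ b).
Proof. by apply: eq_card => k; rewrite !inE ffunE; case: b (t k) => -[]. Qed.

Lemma gibbs_weight_toggle_minus t j : 0 < be -> ~~ t j ->
  gibbs_weight e be ga la (negc (toggle j t)) =
  flip_activity false (deg e j) * nbr_factor e (be * ga) j t * gibbs_weight e be ga la (negc t).
Proof.
move=> be_gt0 tj; set s := toggle j (negc t).
have sj : ~~ s j by rewrite /s toggle_at ffunE negbK.
have := gibbs_weight_toggle e_sym e_irr be ga la sj.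
rewrite /s toggleK !(nbr_count_toggle e_irr) !nbr_count_negc /= => h.
have lbm0 : la * be ^+ nbr_count e t j false != 0 by rewrite mulf_neq0 ?expf_neq0 ?gt_eqF.
rewrite negc_toggle -/s -(mulfK lbm0 (gibbs_weight e be ga la s)) -h.
rewrite nbr_factorE (deg_nbr_count e t j) /flip_activity exprD exprMn.
have bp0 : be ^+ nbr_count e t j true != 0 by rewrite expf_neq0 ?gt_eqF.
have bm0 : be ^+ nbr_count e t j false != 0 by rewrite expf_neq0 ?gt_eqF.
move: (be ^+ _) bp0 (be ^+ _) bm0 lbm0 (ga ^+ _) (gibbs_weight _ _ _ _ _) => bp bp0 bm bm0 lbm0 gp w.
by field; rewrite bp0 bm0 gt_eqF.
Qed.

Lemma flip_gibbs_toggle chi t j : (chi = false -> 0 < be) -> ~~ t j ->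
  flip (gibbs e be ga la) chi (toggle j t) =
  flip_activity chi (deg e j) * nbr_factor e (be * ga) j t * flip (gibbs e be ga la) chi t.
Proof.
move=> hchi tj; rewrite /flip /gibbs mulrA; congr (_ / _).
case: chi hchi => [_|/(_ erefl) be_gt0]; first exact: gibbs_weight_toggle_plus.
exact: gibbs_weight_toggle_minus.
Qed.

Lemma flip_gibbs_ge0 chi t : 0 <= flip (gibbs e be ga la) chi t.
Proof.
have W_ge0 s : 0 <= gibbs_weight e be ga la s.
  by rewrite /gibbs_weight !mulr_ge0 ?exprn_ge0 ?(ltW ga_gt0) ?(ltW la_gt0).
by rewrite /flip /gibbs divr_ge0 ?sumr_ge0.
Qed.

End FlipGibbs.

Section ScaledField.
Variable R : realType.
Implicit Types (c w : R) (d : nat).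

Lemma expR5_le : expR 5 <= 1024 :> R.
Proof.
have half : expR (1 / 2) <= 2 :> R.
  have := expR_ge1Dx (- (1 / 2) : R); rewrite expRN => h.
  have : 2^-1 <= (expR (1 / 2))^-1 :> R by apply: le_trans h; lra.
  by rewrite lef_pV2 ?posrE ?expR_gt0.
have -> : 5 = 10%:R * (1 / 2) :> R by lra.
rewrite expRM_natl (le_trans (lerXn2r _ _ _ half)) ?nnegrE ?expR_ge0 //.
by rewrite -[leRHS]/(1024%:R) -natrX.
Qed.

(* With c = beta gamma and u = x / gamma for a positive fixed point x of F_d, one has
   lambda / gamma^(d+1) = scaled_field c d u, and the uniqueness gap at x reads
   uniq_cond c d u. *)
Definition scaled_field c d w : R := w * ((1 + w) / (1 + c * w)) ^+ d.
Definition uniq_cond c d w : Prop := d%:R * (1 - c) * w <= (1 + c * w) * (1 + w).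

Lemma uniq_cond_le4 c d w : 0 <= c <= 1 -> 0 < w -> (2 <= d)%N -> c * w ^+ 2 <= 1 ->
  uniq_cond c d w -> w <= 4.
Proof.
move=> /andP[c0 c1] w0 d2 cw2 uq; rewrite leNgt; apply/negP => w4.
have h1 : c * w * 4 <= 1.
  by apply: le_trans cw2; rewrite expr2 mulrA ler_wpM2l ?mulr_ge0 // ltW.
have d2R : 2 <= d%:R :> R by rewrite (ler_nat R 2).
have h2 : 2 * (1 - c) * w <= (1 + c * w) * (1 + w).
  by apply: le_trans uq; rewrite -!mulrA ler_wpM2r //; apply: mulr_ge0; lra.
rewrite expr2 in cw2; nra.
Qed.

Lemma scaled_ratio_expn_le c d w : 0 <= c -> 0 < w -> w <= 4 -> uniq_cond c d w ->
  ((1 + w) / (1 + c * w)) ^+ d <= expR 5.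
Proof.
rewrite /uniq_cond => c0 w0 w4 uq; have cw0 : 0 <= c * w by rewrite mulr_ge0 // ltW.
set y := (1 - c) * w / (1 + c * w).
have ry : (1 + w) / (1 + c * w) = 1 + y by rewrite /y; field; rewrite gt_eqF //; lra.
have y1 : 0 <= 1 + y by rewrite -ry divr_ge0 //; lra.
rewrite ry.
apply: le_trans (_ : expR y ^+ d <= _).
  by apply: lerXn2r; rewrite ?nnegrE ?expR_ge0 ?expR_ge1Dx.
rewrite -expRM_natl ler_expR /y !mulrA ler_pdivrMr; last by lra.
by apply: le_trans uq _; nra.
Qed.

Lemma scaled_field_bounds c d w : 0 <= c <= 1 -> 0 < w -> (2 <= d)%N ->
  c * w ^+ 2 <= 1 -> uniq_cond c d w ->
  scaled_field c d w <= 4 * expR 5 /\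
  d.+1%:R * (1 - c) * scaled_field c d w <= 15 * expR 5.
Proof.
move=> c01 w0 d2 cw2 uq; have [c0 c1] := andP c01.
have w4 := uniq_cond_le4 c01 w0 d2 cw2 uq.
have pw := scaled_ratio_expn_le c0 w0 w4 uq.
have pw0 : 0 <= ((1 + w) / (1 + c * w)) ^+ d.
  by rewrite exprn_ge0 // divr_ge0 // addr_ge0 ?mulr_ge0 // ltW.
split; first by rewrite /scaled_field ler_pM // ltW.
have cw1 : c * w <= 1.
  case: (lerP w 1) => w1; first by nra.
  by apply: le_trans cw2; rewrite expr2 mulrA ler_peMr ?mulr_ge0 // ltW.
have d2R : 2 <= d%:R :> R by rewrite (ler_nat R 2).
have : d.+1%:R * (1 - c) * w <= 15 by move: uq; rewrite /uniq_cond -natr1; nra.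
rewrite /scaled_field mulrA => h; rewrite ler_pM // ?expR_ge0 //.
by rewrite !mulr_ge0 ?subr_ge0 // ltW.
Qed.

Lemma scaled_field_inv c d u : 0 < c -> 0 < u ->
  scaled_field c d (c * u)^-1 = (c ^+ d.+1 * scaled_field c d u)^-1.
Proof.
move=> c0 u0; have cu0 : 0 < 1 + c * u by rewrite addr_gt0 ?mulr_gt0.
rewrite /scaled_field.
have -> : (1 + (c * u)^-1) / (1 + c * (c * u)^-1) = (c * ((1 + u) / (1 + c * u)))^-1.
  by field; rewrite !gt_eqF // addr_gt0.
have : (1 + u) / (1 + c * u) != 0 by rewrite gt_eqF // divr_gt0 // addr_gt0.
move: ((1 + u) / (1 + c * u)) => r r0.
rewrite exprVn exprMn exprS.
have rd : r ^+ d != 0 by rewrite expf_neq0.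
have cd : c ^+ d != 0 by rewrite expf_neq0 // gt_eqF.
move: (r ^+ d) (c ^+ d) rd cd => A B A0 B0.
by field; rewrite A0 B0 !gt_eqF.
Qed.

Lemma uniq_cond_inv c d u : 0 < c -> 0 < u -> uniq_cond c d u -> uniq_cond c d (c * u)^-1.
Proof.
rewrite /uniq_cond => c0 u0 h; rewrite -subr_ge0.
have -> : (1 + c * (c * u)^-1) * (1 + (c * u)^-1) - d%:R * (1 - c) * (c * u)^-1 =
    ((1 + c * u) * (1 + u) - d%:R * (1 - c) * u) / (c * u ^+ 2).
  by field; rewrite !gt_eqF.
by rewrite divr_ge0 ?subr_ge0 // mulr_ge0 ?sqr_ge0 // ltW.
Qed.

Lemma scaled_field_sqr_le1 c d u : 0 <= c < 1 -> 0 < u ->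
  (c ^+ d.+1 * scaled_field c d u ^+ 2 <= 1) = (c * u ^+ 2 <= 1).
Proof.
move=> /andP[c0 c1] u0; have cu0 : 0 < 1 + c * u by rewrite ltr_wpDr // mulr_ge0 // ltW.
set r := (1 + u) / (1 + c * u).
have -> : c ^+ d.+1 * scaled_field c d u ^+ 2 = c * u ^+ 2 * (c * r ^+ 2) ^+ d.
  change (c ^+ d.+1 * (u * r ^+ d) ^+ 2 = c * u ^+ 2 * (c * r ^+ 2) ^+ d).
  clearbody r; rewrite exprS !exprMn [(r ^+ d) ^+ 2]expr2.
  by move: (c ^+ d) (r ^+ d) => cd rd; ring.
have cr1 : c * r ^+ 2 - 1 = (1 - c) * (c * u ^+ 2 - 1) / (1 + c * u) ^+ 2.
  by rewrite /r; field; rewrite gt_eqF.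
have cr_le1 : (c * r ^+ 2 <= 1) = (c * u ^+ 2 <= 1).
  by rewrite -subr_le0 cr1 pmulr_lle0 ?invr_gt0 ?exprn_gt0 // pmulr_rle0 ?subr_gt0 // subr_le0.
have A0 : 0 <= c * u ^+ 2 by rewrite mulr_ge0 ?sqr_ge0.
have B0 : 0 <= c * r ^+ 2 by rewrite mulr_ge0 ?sqr_ge0.
case: (lerP (c * u ^+ 2) 1) => A1.
  by rewrite mulr_ile1 ?exprn_ge0 ?exprn_ile1 ?cr_le1.
apply/negbTE; rewrite -ltNge (lt_le_trans A1) // ler_peMr // exprn_ege1 //.
by apply: ltW; rewrite ltNge cr_le1 -ltNge.
Qed.

End ScaledField.

Section FixedPoint.
Variables (R : realType) (be ga la x : R) (d : nat).
Hypotheses (be_ge0 : 0 <= be) (ga_gt0 : 0 < ga) (la_gt0 : 0 < la) (bega_lt1 : be * ga < 1).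
Hypotheses (x_gt0 : 0 < x) (x_fix : Fd be ga la d x = x).
Hypothesis x_uniq : d%:R * (1 - be * ga) * x / ((be * x + 1) * (x + ga)) <= 1.

Let c := be * ga.
Let u := x / ga.

Let c01 : 0 <= c <= 1.
Proof. by rewrite /c mulr_ge0 ?(ltW ga_gt0) ?(ltW bega_lt1). Qed.

Let u_gt0 : 0 < u.
Proof. exact: divr_gt0. Qed.

Lemma fixpt_scaled_field : la / ga ^+ d.+1 = scaled_field c d u.
Proof.
have bx : 0 < be * x + 1 by rewrite ltr_wpDl // mulr_ge0 // ltW.
have xg : 0 < x + ga by rewrite addr_gt0.
set a := (be * x + 1) / (x + ga).
have a0 : 0 < a by rewrite divr_gt0.
have -> : la = x / a ^+ d.
  by move: x_fix; rewrite /Fd -/a => <-; rewrite mulfK // gt_eqF // exprn_gt0.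
rewrite /scaled_field.
have -> : (1 + u) / (1 + c * u) = (ga * a)^-1 by rewrite /u /c /a; field; rewrite !gt_eqF.
clearbody a; rewrite exprVn exprMn exprS.
have gd0 : ga ^+ d != 0 by rewrite gt_eqF // exprn_gt0.
have ad0 : a ^+ d != 0 by rewrite gt_eqF // exprn_gt0.
by rewrite /u; field; rewrite gd0 ad0 gt_eqF.
Qed.

Lemma fixpt_uniq_cond : uniq_cond c d u.
Proof.
have bx : 0 < be * x + 1 by rewrite ltr_wpDl // mulr_ge0 // ltW.
have xg : 0 < x + ga by rewrite addr_gt0.
move: x_uniq; rewrite ler_pdivrMr ?mulr_gt0 // mul1r /uniq_cond => h.
have -> : (1 + c * u) * (1 + u) = (be * x + 1) * (x + ga) / ga.
  by rewrite /c /u; field; rewrite gt_eqF.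
by rewrite /u mulrA ler_pM2r // invr_gt0.
Qed.

Lemma chi_of_fixpt : chi_of be ga la d.+1 = (c * u ^+ 2 <= 1).
Proof.
rewrite /chi_of; case: (eqVneq be 0) => [be0|be_neq0]; first by rewrite /c be0 !mul0r ler01.
have be_gt0 : 0 < be by rewrite lt_def be_neq0.
have q_gt0 : 0 < ga / be by rewrite divr_gt0.
have c01' : 0 <= c < 1 by rewrite /c mulr_ge0 ?(ltW ga_gt0).
rewrite -(scaled_field_sqr_le1 d c01' u_gt0) -fixpt_scaled_field.
have P2 : (ga / be) `^ (d.+1%:R / 2) ^+ 2 = (ga / be) ^+ d.+1.
  rewrite -powR_mulrn ?powR_ge0 // -powRrM -powR_mulrn ?ltW //.
  by rewrite divfK ?pnatr_eq0.
have -> : (la <= (ga / be) `^ (d.+1%:R / 2)) = (la ^+ 2 <= (ga / be) ^+ d.+1).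
  by rewrite -P2 ler_pXn2r ?nnegrE ?powR_ge0 // ltW.
have -> : c ^+ d.+1 * (la / ga ^+ d.+1) ^+ 2 = la ^+ 2 / (ga / be) ^+ d.+1.
  rewrite /c !exprMn !exprVn.
  have gd0 : ga ^+ d.+1 != 0 by rewrite gt_eqF // exprn_gt0.
  have bd0 : be ^+ d.+1 != 0 by rewrite gt_eqF // exprn_gt0.
  by move: (ga ^+ d.+1) (be ^+ d.+1) gd0 bd0 => G B G0 B0; field; rewrite G0 B0.
by rewrite ler_pdivrMr ?exprn_gt0 // mul1r.
Qed.

Lemma flip_activity_fixpt_bounds : (2 <= d)%N ->
  let M := flip_activity be ga la (chi_of be ga la d.+1) d.+1 in
  M <= 4 * expR 5 /\ d.+1%:R * (1 - be * ga) * M <= 15 * expR 5.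
Proof.
move=> d2; rewrite chi_of_fixpt /flip_activity -/c; case: ifP => cu2.
  rewrite fixpt_scaled_field; exact: scaled_field_bounds c01 u_gt0 d2 cu2 fixpt_uniq_cond.
have c_gt0 : 0 < c.
  by rewrite lt_def (andP c01).1 andbT; apply: contraFneq cu2 => ->; rewrite mul0r ler01.
have be_gt0 : 0 < be by move: c_gt0; rewrite /c pmulr_lgt0.
have -> : (la * be ^+ d.+1)^-1 = scaled_field c d (c * u)^-1.
  rewrite scaled_field_inv // -fixpt_scaled_field /c exprMn.
  have gd0 : ga ^+ d.+1 != 0 by rewrite gt_eqF // exprn_gt0.
  by congr (_^-1); move: (ga ^+ d.+1) gd0 => G G0; field.
apply: scaled_field_bounds => //; first by rewrite invr_gt0 mulr_gt0.
  have -> : c * ((c * u)^-1) ^+ 2 = (c * u ^+ 2)^-1.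
    by rewrite !expr2; field; rewrite !gt_eqF.
  have cu2' : 1 < c * u ^+ 2 by rewrite ltNge cu2.
  by rewrite invf_le1 ?ltW // (lt_trans ltr01 cu2').
exact: uniq_cond_inv c_gt0 u_gt0 fixpt_uniq_cond.
Qed.

End FixedPoint.

Theorem lemma7p8 (R : realType) (V : finType) (e : rel V)
  (beta gamma lambda delta : R) (D : nat) :
  simple_graph e ->
  antiferro beta gamma lambda ->
  0 < delta < 1 ->
  (3 <= D)%N ->
  maxdeg e = D ->
  ((gamma <= 1 /\ forall d : nat, (1 <= d)%N -> (d <= D - 1)%N ->
        d_unique beta gamma lambda d delta)
   \/ (1 < gamma /\ d_unique beta gamma lambda (D - 1) delta /\ regular e D)) ->
  completely_marginally_stable
    (flip (gibbs e beta gamma lambda) (chi_of beta gamma lambda D))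
    (expR (12%:R ^+ 5)).
Proof.
move=> [e_sym e_irr] [be0 [bega [ga0 [la0 bega1]]]] /andP[delta0 _] + maxD.
case: D maxD => [|d] // maxD d2; rewrite subn1 /= => Hcase.
have [[x [x0 xfix]] xuniq] : d_unique beta gamma lambda d delta.
  by case: Hcase => [[_ /(_ d)]|[_ []]] //; apply=> //; exact: ltnW d2.
have xuniq1 : d%:R * (1 - beta * gamma) * x / ((beta * x + 1) * (x + gamma)) <= 1.
  by apply: le_trans (xuniq x x0 xfix) _; lra.
have [M4 M15] := flip_activity_fixpt_bounds be0 ga0 la0 bega1 x0 xfix xuniq1 d2.
set chi := chi_of beta gamma lambda d.+1 in M4 M15 *.
have chi_be : ~~ chi -> 0 < beta <= 1.
  by rewrite /chi /chi_of; case: eqVneq => //= be_neq0 _; rewrite lt_def be_neq0 be0 /=; nra.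
have degD j : (deg e j <= d.+1)%N by rewrite -maxD; exact: (@leq_bigmax V (deg e) j).
have e5 := expR5_le R; have -> : (12%:R ^+ 5 : R) = 248832%:R by rewrite -natrX.
apply: (completely_marginally_stable_local e_irr (c := beta * gamma) (D := d.+1)
  (M := flip_activity beta gamma lambda chi d.+1) (K := fun j => flip_activity beta gamma lambda chi (deg e j))).
- by rewrite mulr_ge0 ?(ltW ga0) ?(ltW bega1).
- move=> j; rewrite flip_activity_ge0 //=; case: Hcase => [[ga1 _]|[_ [_ /(_ j) ->]]] //.
  by apply: flip_activity_le => // _.
- exact: degD.
- by move=> t; apply: flip_gibbs_ge0.
- by move=> j t; apply: flip_gibbs_toggle => // /negbT /chi_be /andP[].
- by apply: le_trans (expR_ge1Dx _); lra.
- by rewrite ler_expR; lra.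
Qed.
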